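(* Let $f_0,\dots,f_n$ be meromorphic functions. For all $x\in\mathbb{C}$ with $|x|>\mathcal{R}(n,q)$ and every choice $\delta_0,\dots,\delta_{n-1}\in\{1,-1\}$, $$\mathcal{W}(f_0,\dots,f_n)(x)=\det\big(\eta_q^{\delta_i(n-i)}\mathcal{D}_q^if_j\big)_{0\le i,j\le n}(x)$$ (with $\delta_n(n-n)=0$, so the last row is $\mathcal{D}_q^nf_j$), and $$\mathcal{W}(f_0,\dots,f_n)(x)=\det\big(\eta_q^{n-2i}f_j\big)_{0\le i,j\le n}(x)\cdot\prod_{i=1}^{n}\prod_{j=1}^{i}\frac{-1}{\eta_q^{i-2j+2}x-\eta_q^{i-2j}x}.$$
   Context: Fix $q\in\mathbb{C}$ with $0<|q|<1$. Every $x\in\mathbb{C}$ is written uniquely as $x=\frac{z+z^{-1}}{2}$ with $|z|\ge 1$ (when $|z|=1$, $z=x+i\sqrt{1-x^2}$). $(\eta_q f)(x)=f\big(\tfrac{q^{1/2}z+q^{-1/2}z^{-1}}{2}\big)$, $(\eta_q^{-1}f)(x)=f\big(\tfrac{q^{-1/2}z+q^{1/2}z^{-1}}{2}\big)$, $\eta_q^0f=f$, $\eta_q^{k}=\eta_q\circ\eta_q^{k-1}$, $\eta_q^{-k}=\eta_q^{-1}\circ\eta_q^{-(k-1)}$; $(\eta_{q^{\pm k}}f)(x)=f\big(\tfrac{q^{\pm k/2}z+q^{\mp k/2}z^{-1}}{2}\big)$; $\eta_q^kx$ denotes $\eta_q^k$ applied to the identity map. $\mathcal{R}(n,q)>0$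 is a constant such that for $|x|>\mathcal{R}(n,q)$ (e.g. whenever $|z|>|q|^{-n/2}$) one has $\eta_q^{\pm k}f=\eta_{q^{\pm k}}f$ for $0\le k\le n$ and $\eta_q^{-m_1}\eta_q^{m_2}=\eta_q^{m_2}\eta_q^{-m_1}=\eta_q^{m_2-m_1}$ for $0\le m_1,m_2\le n$. Askey-Wilson operator $(\mathcal{D}_qf)(x)=\frac{(\eta_qf)(x)-(\eta_q^{-1}f)(x)}{\eta_qx-\eta_q^{-1}x}$ ($x\ne\pm1$; limit at $\pm1$), $\mathcal{D}_q^0f=f$, $\mathcal{D}_q^k=\mathcal{D}_q\circ\mathcal{D}_q^{k-1}$; $(\mathcal{A}_{q^k}f)(x)=\frac{(\eta_{q^k}f)(x)+(\eta_{q^{-k}}f)(x)}{2}$, $\mathcal{A}_{q^0}f=f$. The Askey-Wilson Wronskian-Casorati determinant is $\mathcal{W}(f_0,\dots,f_n)(x)=\det\big(\mathcal{A}_{q^{n-i}}\mathcal{D}_q^{i}f_j\big)_{0\le i,j\le n}(x)$ (row index $i$, column index $j$). *)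

From HB Require Import structures.
From mathcomp Require Import all_boot all_order all_algebra.
From mathcomp Require Import complex.
From mathcomp Require Import reals.
Set Implicit Arguments. Unset Strict Implicit. Unset Printing Implicit Defensive.
Import Order.TTheory GRing.Theory Num.Theory.
Local Open Scope ring_scope.

Section AW.
Variable R : realType.
Notation C := R[i].
(* s is the fixed square root q^{1/2} of q; q^{k/2} := s^k. *)
Variable s : C.

(* The representation x = (z + z^-1)/2 with |z| >= 1; when |z| = 1,
   z = x + i sqrt(1 - x^2).  w below is a root of z^2 - 2 x z + 1 = 0,
   the other root being w^-1. *)
Definition zrep (x : C) : C :=
  let w := x + 'i * sqrtC (1 - x ^+ 2) in
  if 1 <= `|w| then w else w^-1.

Definition eta_pow (k : int) (f : C -> C) : C -> C :=
  fun x => let z := zrep x in f ((s ^ k * z + s ^ (- k) * z^-1) / 2%:R).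

Definition eta1 (f : C -> C) : C -> C := eta_pow 1 f.
Definition etam1 (f : C -> C) : C -> C := eta_pow (-1) f.

Definition eta_it (k : int) (f : C -> C) : C -> C :=
  match k with
  | Posz m => iter m eta1 f
  | Negz m => iter m.+1 etam1 f
  end.

(* Askey-Wilson operator; at x = +-1 the paper takes a limit. That value
   is never used in the region of the theorem; we put 0. *)
Definition Dq (f : C -> C) : C -> C :=
  fun x => if (x == 1) || (x == -1) then 0
           else (eta1 f x - etam1 f x) / (eta1 id x - etam1 id x).

Definition Dq_it (k : nat) (f : C -> C) : C -> C := iter k Dq f.

Definition Aq (k : nat) (f : C -> C) : C -> C :=
  fun x => if k == 0%N then f x
           else (eta_pow k%:Z f x + eta_pow (- k%:Z) f x) / 2%:R.

Definition AWW (n : nat) (fs : 'I_n.+1 -> C -> C) (x : C) : C :=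
  \det (\matrix_(i < n.+1, j < n.+1) Aq (n - i) (Dq_it i (fs j)) x).

(* The constant R(n,q): for |x| > Rnq n, one has |z| > |q|^{-n/2}. *)
Definition Rnq (n : nat) : C := (`|s| ^- n + `|s| ^+ n) / 2%:R.

End AW.

(* Write x = (z + z^-1)/2 and x_m = (q^(m/2) z + q^(-m/2) z^-1)/2.  For |x| > R(n,q)
   all the points x_m with m <= n are represented by z_m = q^(m/2) z with |z_m| > 1,
   so eta_q^k g (x_m) = g (x_(m+k)) and D_q g (x_m) = (g x_(m+1) - g x_(m-1)) /
   (x_(m+1) - x_(m-1)).  Hence every row of every matrix in the statement is a
   row of the divided-difference tableau of the f_j on the nodes x_n, x_(n-2), ...,
   x_(-n), whose entry of order i and index k is D_q^i f_j (x_(n-i-2k)).  Two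
   entries of the same order differ by a combination of entries of higher order,
   so replacing row i by another entry of order i, or by an average of two such
   entries as in A_(q^(n-i)), does not change the determinant.  The leading
   entries of the tableau are a triangular transform of the values
   f_j (x_(n-2k)) whose diagonal is made of the factors -1/(x_(a+2) - x_a). *)

From HB Require Import structures.
From mathcomp Require Import all_boot all_order all_algebra.
From mathcomp Require Import complex reals.
From mathcomp Require Import ring zify.
Import Order.TTheory GRing.Theory Num.Theory.
Set Implicit Arguments. Unset Strict Implicit. Unset Printing Implicit Defensive.
Local Open Scope ring_scope.

Section RowsFrom.
Variable K : fieldType.

Definition rows_from m p (B : 'M[K]_(m, p)) (l : nat) : 'M[K]_(m, p) :=
  \matrix_(i, j) if (l <= i)%N then B i j else 0.

Lemma row_sub_rows_from m p (B : 'M[K]_(m, p)) l (i : 'I_m) :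
  (l <= i)%N -> (row i B <= rows_from B l)%MS.
Proof.
move=> li; apply: (eq_row_sub i); apply/rowP => j.
by rewrite !mxE li.
Qed.

Lemma rows_from_monotone m p (B : 'M[K]_(m, p)) l l' :
  (l <= l')%N -> (rows_from B l' <= rows_from B l)%MS.
Proof.
move=> ll'; apply/row_subP => i; have [l'i | il'] := leqP l' i.
  have -> : row i (rows_from B l') = row i B by apply/rowP => j; rewrite !mxE l'i.
  exact/row_sub_rows_from/(leq_trans ll').
have -> : row i (rows_from B l') = 0 by apply/rowP => j; rewrite !mxE leqNgt il'.
exact: sub0mx.
Qed.

Lemma mulmx_rows_from m p (B : 'M[K]_(m, p)) l (w : 'rV[K]_m) :
  w *m rows_from B l = (\row_i if (l <= i)%N then w 0 i else 0) *m B.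
Proof.
apply/rowP => j; rewrite !mxE; apply: eq_bigr => i _; rewrite !mxE.
by case: ifP; rewrite ?mulr0 ?mul0r.
Qed.

(* The hypothesis makes [A = (1 + N) *m B] with [N] strictly upper triangular. *)
Lemma det_add_rows_from n (A B : 'M[K]_n) :
  (forall i : 'I_n, (row i A - row i B <= rows_from B i.+1)%MS) ->
  \det A = \det B.
Proof.
move=> AB.
pose N := \matrix_(i < n) \row_j
  (if (i < j)%N then ((row i A - row i B) *m pinvmx (rows_from B i.+1)) 0 j else 0).
have -> : A = (1 + N) *m B.
  apply/row_matrixP => i; rewrite mulmxDl mul1mx linearD /=.
  rewrite row_mul rowK -mulmx_rows_from mulmxKpV ?AB //.
  by rewrite addrC subrK.
rewrite det_mulmx -det_tr det_trig ?big1 ?mul1r // => [i _|].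
  by rewrite !mxE eqxx ltnn addr0.
apply/is_trig_mxP => i j ij; rewrite !mxE.
rewrite ltnNge ltnW // addr0; case: eqP => // ji; by move: ij; rewrite ji ltnn.
Qed.

End RowsFrom.

Section DividedDifferences.
Variables (K : fieldType) (D : nat -> nat -> K).

Fixpoint divdiff m (v : nat -> 'rV[K]_m) (l k : nat) : 'rV[K]_m :=
  if l is l'.+1 then (D l' k)^-1 *: (divdiff v l' k - divdiff v l' k.+1)
  else v k.

Definition unit_row n (k : nat) : 'rV[K]_n.+1 := \row_(j < n.+1) ((j : nat) == k)%:R.

Lemma divdiff_unit_rows m n (v : nat -> 'rV[K]_m) l k : (k + l <= n)%N ->
  divdiff v l k = divdiff (@unit_row n) l k *m \matrix_(i < n.+1) v i.
Proof.
elim: l k => [|l IH] k kl /=.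
  apply/rowP => j; rewrite /unit_row !mxE (bigD1 (inord k)) //= big1 => [|i ik].
    by rewrite !mxE inordK ?eqxx ?mul1r ?addr0 // ltnS -(addn0 k).
  rewrite !mxE; case: eqP => [ik'|]; last by rewrite mul0r.
  by case/eqP: ik; apply/val_inj; rewrite /= inordK ?ik' // ltnS -(addn0 k).
by rewrite -scalemxAl mulmxBl -!IH //; lia.
Qed.

Lemma divdiff_unit_row_gt n l k (j : 'I_n.+1) :
  (k + l < j)%N -> divdiff (@unit_row n) l k 0 j = 0.
Proof.
elim: l k => [|l IH] k kl /=; first by rewrite !mxE; case: eqP => // jk; lia.
by rewrite !mxE !IH ?subrr ?mulr0 //; lia.
Qed.

Lemma divdiff_unit_row_diag n l k (j : 'I_n.+1) : (j : nat) = (k + l)%N ->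
  divdiff (@unit_row n) l k 0 j = \prod_(t < l) (-1 / D t (k + l - t.+1)%N).
Proof.
elim: l k => [|l IH] k jkl /=; first by rewrite big_ord0 !mxE jkl addn0 eqxx.
rewrite !mxE divdiff_unit_row_gt; last by lia.
rewrite (IH k.+1) ?big_ord_recr /=; last by lia.
have -> : (k + l.+1 - l.+1 = k)%N by lia.
rewrite sub0r mulN1r !mulrN mulrC; congr (- (_ * _)).
by apply: eq_bigr => t _; rewrite addSnnS.
Qed.

Lemma det_divdiff n (v : nat -> 'rV[K]_n.+1) :
  \det (\matrix_(i < n.+1) divdiff v i 0) =
  (\prod_(l < n.+1) \prod_(t < l) (-1 / D t (l - t.+1)%N)) *
  \det (\matrix_(i < n.+1) v i).
Proof.
pose L := \matrix_(i < n.+1) divdiff (@unit_row n) i 0.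
have -> : \matrix_(i < n.+1) divdiff v i 0 = L *m \matrix_(i < n.+1) v i.
  apply/row_matrixP => i; rewrite row_mul !rowK -divdiff_unit_rows //.
  by rewrite add0n -ltnS.
rewrite det_mulmx det_trig; last first.
  by apply/is_trig_mxP => i j ij; rewrite mxE divdiff_unit_row_gt.
by congr (_ * _); apply: eq_bigr => i _; rewrite mxE divdiff_unit_row_diag.
Qed.

Section Pivots.
Variables (n : nat) (v : nat -> 'rV[K]_n.+1).
Hypothesis D_neq0 : forall l k, (l < n)%N -> (k < n - l)%N -> D l k != 0.

Let B := \matrix_(i < n.+1) divdiff v i 0.

Lemma divdiffSk l k : (l < n)%N -> (k < n - l)%N ->
  divdiff v l k.+1 = divdiff v l k - D l k *: divdiff v l.+1 k.
Proof.
by move=> ln kl /=; rewrite scalerA mulfV ?D_neq0 // scale1r opprB addrC subrK.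
Qed.

Lemma divdiffB_sub_rows_from l k : (l + k <= n)%N ->
  (divdiff v l k - divdiff v l 0 <= rows_from B l.+1)%MS.
Proof.
elim: k l => [|k IH] l lkn; first by rewrite subrr sub0mx.
rewrite divdiffSk; try lia.
rewrite addrAC addmx_sub ?IH //; first lia.
rewrite -scaleNr scalemx_sub // -[divdiff v l.+1 k](subrK (divdiff v l.+1 0)).
have ln : (l.+1 < n.+1)%N by lia.
rewrite addmx_sub //.
  apply: submx_trans (rows_from_monotone _ (leqnSn _)); apply: IH; lia.
have -> : divdiff v l.+1 0 = row (Ordinal ln) B by rewrite rowK.
exact: row_sub_rows_from.
Qed.

Lemma det_divdiff_pivots (A : 'M[K]_n.+1) :
  (forall i : 'I_n.+1, exists2 k, (i + k <= n)%N &
     (row i A - divdiff v i 0 <= (divdiff v i k - divdiff v i 0))%MS) ->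
  \det A = \det B.
Proof.
move=> hA; apply: det_add_rows_from => i; rewrite rowK.
have [k ik sub] := hA i; apply: submx_trans sub _; exact: divdiffB_sub_rows_from.
Qed.

End Pivots.
End DividedDifferences.

Lemma prod_triangle (K : comNzRingType) n (F : nat -> nat -> K) :
  \prod_(l < n.+1) \prod_(t < l) F (n - t)%N (l - t)%N =
  \prod_(1 <= i < n.+1) \prod_(1 <= j < i.+1) F i j.
Proof.
elim: n => [|n IH]; first by rewrite big_ord1 big_ord0 big_geq.
rewrite big_ord_recl big_ord0 mul1r big_nat_recr //= -IH mulrC.
under eq_bigr => l _ do rewrite big_ord_recl /= subn0.
by rewrite big_split /= big_add1 big_mkord.
Qed.

Lemma normrXz (F : numFieldType) (x : F) (m : int) : `|x ^ m| = `|x| ^ m.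
Proof. by case: m => k; rewrite /exprz ?normfV normrX. Qed.

Lemma lt_of_add_inv_lt (F : numFieldType) (a t : F) :
  1 <= a -> 1 <= t -> a + a^-1 < t + t^-1 -> a < t.
Proof.
move=> a1 t1; have a0 : 0 < a := lt_le_trans ltr01 a1.
have t0 : 0 < t := lt_le_trans ltr01 t1.
move=> h; rewrite real_ltNge ?gtr0_real //; apply/negP => ta.
suff th : t + t^-1 <= a + a^-1 by have := lt_le_trans h th; rewrite lt_def eqxx.
rewrite -subr_ge0 (_ : _ - _ = (a - t) * (1 - (a * t)^-1)); last first.
  by field; rewrite !gt_eqF.
apply: mulr_ge0; first by rewrite subr_ge0.
by rewrite subr_ge0 invf_le1 ?mulr_gt0 // mulr_ege1.
Qed.

Section Joukowski.
Variable R : realType.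
Implicit Types u x : R[i].

Definition joukowski u : R[i] := (u + u^-1) / 2%:R.

Lemma joukowskiV u : joukowski u^-1 = joukowski u.
Proof. by rewrite /joukowski invrK addrC. Qed.

Lemma joukowski_zrep_root x : let w := x + 'i * sqrtC (1 - x ^+ 2) in
  w != 0 /\ joukowski w = x.
Proof.
move=> w; have quad : w ^+ 2 - 2%:R * x * w + 1 = 0.
  rewrite (_ : _ + 1 = 'i ^+ 2 * sqrtC (1 - x ^+ 2) ^+ 2 + 1 - x ^+ 2).
    by rewrite sqrCi sqrtCK; ring.
  by rewrite /w; ring.
have w0 : w != 0.
  apply/eqP => w0; move: quad; rewrite w0 expr0n mulr0 subr0 add0r.
  by apply/eqP; rewrite oner_eq0.
split=> //; apply/eqP; rewrite -subr_eq0.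
have -> : joukowski w - x = (w ^+ 2 - 2%:R * x * w + 1) / (2%:R * w).
  by rewrite /joukowski; field; rewrite w0.
by rewrite quad mul0r.
Qed.

Lemma joukowski_zrep x : joukowski (zrep x) = x.
Proof.
have [_ wx] := joukowski_zrep_root x.
by rewrite /zrep; case: ifP; rewrite ?joukowskiV.
Qed.

Lemma zrep_ge1 x : 1 <= `|zrep x|.
Proof.
have [w0 _] := joukowski_zrep_root x.
rewrite /zrep; case: ifP => // /negbT w1.
rewrite normfV invf_ge1 ?normr_gt0 // ltW //.
by rewrite real_ltNge ?normr_real.
Qed.

Lemma zrep_joukowski u : 1 < `|u| -> zrep (joukowski u) = u.
Proof.
move=> u1; have u0 : u != 0 by rewrite -normr_gt0 (lt_trans ltr01).
have [w0 wu] := joukowski_zrep_root (joukowski u); move: w0 wu.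
rewrite /zrep; set w := _ + _ => w0 wu.
have : (w - u) * (w - u^-1) == 2%:R * w * (joukowski w - joukowski u).
  by apply/eqP; rewrite /joukowski; field; rewrite u0 w0.
rewrite wu subrr mulr0.
rewrite mulf_eq0 !subr_eq0 => /orP[] /eqP ->; first by rewrite ltW.
by rewrite normfV invf_ge1 ?normr_gt0 // lt_geF // invrK.
Qed.

End Joukowski.


Lemma norm_joukowski_le (R : realType) (u : R[i]) :
  `|joukowski u| <= (`|u| + `|u|^-1) / 2%:R.
Proof.
by rewrite normrM normfV normr_nat ler_pM2r ?invr_gt0 ?ltr0n // -normfV ler_normD.
Qed.

Lemma aw_region_of_Rnq (R : realType) (s x : R[i]) n :
  0 < `|s| -> `|s| < 1 -> Rnq s n < `|x| ->
  forall m : int, m <= n%:Z -> 1 < `|s ^ m * zrep x|.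
Proof.
move=> s0 s1 xR m mn; set u := zrep x.
have u1 : 1 <= `|u| := zrep_ge1 x.
have sn0 : 0 < `|s| ^+ n := exprn_gt0 n s0.
have a1 : 1 <= `|s| ^- n by rewrite invf_ge1 // exprn_ile1 // ltW.
have au : `|s| ^- n < `|u|.
  apply: lt_of_add_inv_lt => //; rewrite invrK.
  rewrite -(ltr_pM2r (x := 2%:R^-1)) ?invr_gt0 ?ltr0n //.
  apply: lt_le_trans xR _; rewrite -(joukowski_zrep x) -/u.
  exact: norm_joukowski_le.
have [k ->] : exists k : nat, m = n%:Z - k%:Z by exists `|n%:Z - m|%N; lia.
rewrite normrM normrXz.
apply: (@le_lt_trans _ _ (`|s| ^ (n%:Z - k%:Z) * `|s| ^- n)); last first.
  by rewrite ltr_pM2l ?exprz_gt0.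
rewrite expfzDr ?gt_eqF // -exprnN mulrAC mulfV ?gt_eqF // mul1r.
by rewrite invf_ge1 ?exprn_gt0 // exprn_ile1 // ltW.
Qed.

Section AskeyWilsonLattice.
Variables (R : realType) (s z : R[i]).
Hypothesis s_neq0 : s != 0.

(* [s] stands for q^(1/2), so [aw_point m] is the paper's x_m. *)
Definition aw_point (m : int) : R[i] := joukowski (s ^ m * z).

Definition aw_diff (h : int -> R[i]) (m : int) : R[i] :=
  (h (m + 1) - h (m - 1)) / (aw_point (m + 1) - aw_point (m - 1)).

Definition aw_gap (m0 : int) (l k : nat) : R[i] :=
  aw_point (m0 - l%:Z - 2 * k%:Z) - aw_point (m0 - l%:Z - 2 * k%:Z - 2).

Lemma aw_pointD m k : aw_point (m + k) = joukowski (s ^ k * (s ^ m * z)).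
Proof. by rewrite /aw_point expfzDr // mulrAC mulrC. Qed.

Lemma eta_pow_aw_point k m (g : R[i] -> R[i]) : 1 < `|s ^ m * z| ->
  eta_pow s k g (aw_point m) = g (aw_point (m + k)).
Proof.
move=> big; rewrite /eta_pow zrep_joukowski // aw_pointD; congr g.
by rewrite /joukowski -invr_expz [in RHS]invfM.
Qed.

Lemma joukowski_neq_pm1 (u : R[i]) : 1 < `|u| ->
  (joukowski u == 1) || (joukowski u == -1) = false.
Proof.
move=> u1; have u0 : u != 0 by rewrite -normr_gt0 (lt_trans ltr01).
apply/negbTE/norP; split; apply/eqP => ju.
  have : (u - 1) ^+ 2 = 2%:R * u * (joukowski u - 1) by rewrite /joukowski; field.
  rewrite ju subrr mulr0 => /eqP; rewrite sqrf_eq0 subr_eq0 => /eqP u_1.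
  by move: u1; rewrite u_1 normr1 ltxx.
have : (u + 1) ^+ 2 = 2%:R * u * (joukowski u + 1) by rewrite /joukowski; field.
rewrite ju addNr mulr0 => /eqP; rewrite sqrf_eq0 addr_eq0 => /eqP u_1.
by move: u1; rewrite u_1 normrN1 ltxx.
Qed.

Lemma Dq_aw_point m (g : R[i] -> R[i]) : 1 < `|s ^ m * z| ->
  Dq s g (aw_point m) = aw_diff (g \o aw_point) m.
Proof.
move=> big; rewrite /Dq joukowski_neq_pm1 //.
by rewrite /eta1 /etam1 !eta_pow_aw_point.
Qed.

Lemma aw_point_sub_neq0 m : s ^+ 2 != 1 -> 1 < `|s ^ m * z| ->
  aw_point (m + 1) - aw_point (m - 1) != 0.
Proof.
move=> s2 big; set u := s ^ m * z.
have u0 : u != 0 by rewrite -normr_gt0 (lt_trans ltr01).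
have -> : aw_point (m + 1) - aw_point (m - 1) = (s - s^-1) * (u - u^-1) / 2%:R.
  rewrite !aw_pointD expr1z exprN1 -/u /joukowski.
  by field; rewrite s_neq0 u0.
rewrite !mulf_neq0 ?invr_eq0 ?pnatr_eq0 // subr_eq0.
  by apply: contra s2 => /eqP ss; rewrite expr2 {1}ss mulVf.
apply/eqP => uu; have := big; rewrite -/u {1}uu normfV invf_gt1 ?normr_gt0 //.
by move/(lt_trans big); rewrite ltxx.
Qed.

Lemma row_iter_aw_diff (m0 : int) p (h : 'I_p -> int -> R[i]) l k :
  \row_j iter l aw_diff (h j) (m0 - l%:Z - 2 * k%:Z) =
  divdiff (aw_gap m0) (fun k => \row_j h j (m0 - 2 * k%:Z)) l k.
Proof.
elim: l k => [|l IH] k /=; apply/rowP => j; rewrite !mxE.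
  by rewrite subr0.
rewrite -!IH !mxE /aw_diff /aw_gap mulrC.
have -> : m0 - l.+1%:Z - 2 * k%:Z + 1 = m0 - l%:Z - 2 * k%:Z by lia.
have -> : m0 - l.+1%:Z - 2 * k%:Z - 1 = m0 - l%:Z - 2 * k.+1%:Z by lia.
by have -> : m0 - l%:Z - 2 * k.+1%:Z = m0 - l%:Z - 2 * k%:Z - 2 by lia.
Qed.

Section Region.
Variable n : nat.
Hypothesis aw_region : forall m : int, m <= n%:Z -> 1 < `|s ^ m * z|.

Lemma iter_eta_pow_aw_point (e : int) j m (g : R[i] -> R[i]) :
  (forall i : nat, (i < j)%N -> m + e * i%:Z <= n%:Z) ->
  iter j (eta_pow s e) g (aw_point m) = g (aw_point (m + e * j%:Z)).
Proof.
elim: j m => [|j IH] m mn; first by rewrite mulr0 addr0.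
have mn0 : m <= n%:Z by have := mn 0%N; rewrite mulr0 addr0; apply.
rewrite iterS eta_pow_aw_point ?aw_region //.
rewrite IH => [|i ij]; first by congr (g (aw_point _)); rewrite -addn1 PoszD; ring.
rewrite (_ : _ + _ = m + e * i.+1%:Z) ?mn // -addn1 PoszD; ring.
Qed.

Lemma eta_it_aw_point k m (g : R[i] -> R[i]) : m <= n%:Z -> m + k <= n%:Z ->
  eta_it s k g (aw_point m) = g (aw_point (m + k)).
Proof.
case: k => j mn mjn; rewrite /eta_it.
  by rewrite (iter_eta_pow_aw_point (e := 1)) ?mul1r // => i ij; lia.
rewrite (iter_eta_pow_aw_point (e := -1)) => [|i ij]; last by lia.
by rewrite NegzE mulN1r.
Qed.

Lemma Dq_it_aw_point i m (g : R[i] -> R[i]) : m + i%:Z <= n%:Z ->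
  Dq_it s i g (aw_point m) = iter i aw_diff (g \o aw_point) m.
Proof.
elim: i m => [//|i IH] m min.
rewrite /Dq_it iterS -/(Dq_it s i g) Dq_aw_point; last by apply: aw_region; lia.
by rewrite iterS /aw_diff /= !IH //; lia.
Qed.

Lemma Aq_aw_point k (g : R[i] -> R[i]) :
  Aq s k g (aw_point 0) = 2%:R^-1 * (g (aw_point k%:Z) + g (aw_point (- k%:Z))).
Proof.
have big0 : 1 < `|s ^ 0 * z| by apply: aw_region.
rewrite /Aq; case: eqP => [->|_]; first by rewrite oppr0; field.
by rewrite !eta_pow_aw_point // !add0r mulrC.
Qed.

Hypothesis s2_neq1 : s ^+ 2 != 1.
Variable fs : 'I_n.+1 -> R[i] -> R[i].

Let v k := \row_(j < n.+1) fs j (aw_point (n%:Z - 2 * k%:Z)).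
Let V := divdiff (aw_gap n) v.

Lemma aw_gap_neq0 l k : (l < n)%N -> (k < n - l)%N -> aw_gap n l k != 0.
Proof.
move=> ln kl; set m := n%:Z - l.+1%:Z - 2 * k%:Z.
have mn : m <= n%:Z by lia.
have := aw_point_sub_neq0 s2_neq1 (aw_region mn).
rewrite /aw_gap (_ : n%:Z - l%:Z - 2 * k%:Z = m + 1); last lia.
by rewrite (_ : m + 1 - 2 = m - 1) //; lia.
Qed.

Lemma divdiff_entry (i k : nat) j :
  V i k 0 j = Dq_it s i (fs j) (aw_point (n%:Z - i%:Z - 2 * k%:Z)).
Proof.
have /rowP/(_ j) := row_iter_aw_diff n (fun j => fs j \o aw_point) i k.
by rewrite !mxE /V /v => <-; rewrite Dq_it_aw_point //; lia.
Qed.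

Lemma AWW_eq_det_pivots : AWW s fs (aw_point 0) = \det (\matrix_(i < n.+1) V i 0).
Proof.
apply: (det_divdiff_pivots aw_gap_neq0) => i.
exists (n - i)%N; first by rewrite subnKC // -ltnS.
have -> : row i (\matrix_(i, j) Aq s (n - i) (Dq_it s i (fs j)) (aw_point 0)) =
          2%:R^-1 *: (V i (n - i) - V i 0) + V i 0.
  have ilt := ltn_ord i; apply/rowP => j; rewrite !mxE Aq_aw_point !divdiff_entry.
  rewrite (_ : n%:Z - i%:Z - 2 * 0%:Z = (n - i)%N%:Z); last lia.
  rewrite (_ : n%:Z - i%:Z - 2 * (n - i)%N%:Z = - (n - i)%N%:Z); last lia.
  by field.
by rewrite addrK scalemx_sub.
Qed.

Lemma det_shifts_eq_pivots (c : 'I_n.+1 -> nat) :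
  (forall i : 'I_n.+1, (i + c i <= n)%N) ->
  \det (\matrix_(i < n.+1, j < n.+1)
          eta_it s (n%:Z - i%:Z - 2 * (c i)%:Z) (Dq_it s i (fs j)) (aw_point 0)) =
  \det (\matrix_(i < n.+1) V i 0).
Proof.
move=> cn; apply: (det_divdiff_pivots aw_gap_neq0) => i; exists (c i) => //.
have -> : row i (\matrix_(i < n.+1, j < n.+1) eta_it s (n%:Z - i%:Z - 2 * (c i)%:Z)
            (Dq_it s i (fs j)) (aw_point 0)) = V i (c i).
  move: (cn i) => icn; apply/rowP => j.
  by rewrite !mxE divdiff_entry eta_it_aw_point ?add0r //; lia.
exact: submx_refl.
Qed.

Lemma det_pivots :
  \det (\matrix_(i < n.+1) V i 0) =
  (\prod_(l < n.+1) \prod_(t < l) (-1 / aw_gap n t (l - t.+1)%N)) *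
  \det (\matrix_(i, j) eta_it s (n%:Z - 2 * (i : nat)%:Z) (fs j) (aw_point 0)).
Proof.
rewrite det_divdiff; congr (_ * \det _); apply/matrixP => i j.
by rewrite !mxE eta_it_aw_point ?add0r //; lia.
Qed.

End Region.
End AskeyWilsonLattice.

Theorem proposition4p2 (R : realType) (q s : R[i]) (n : nat)
    (fs : 'I_n.+1 -> R[i] -> R[i]) (x : R[i]) (delta : nat -> int) :
  s ^+ 2 = q -> 0 < `|q| -> `|q| < 1 ->
  Rnq s n < `|x| ->
  (forall i : nat, (i < n)%N -> delta i = 1 \/ delta i = -1) ->
  AWW s fs x =
    \det (\matrix_(i < n.+1, j < n.+1)
            eta_it s (delta i * (n - i)%:Z) (Dq_it s i (fs j)) x)
  /\
  AWW s fs x =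
    \det (\matrix_(i < n.+1, j < n.+1)
            eta_it s (n%:Z - 2 * (i : nat)%:Z) (fs j) x) *
    \prod_(1 <= i < n.+1) \prod_(1 <= j < i.+1)
       (-1 / (eta_it s (i%:Z - 2 * j%:Z + 2) id x
              - eta_it s (i%:Z - 2 * j%:Z) id x)).
Proof.
move=> sq q0 q1 xR delta_pm.
have s_neq0 : s != 0 by apply: contraTneq q0 => s0; rewrite -sq s0 expr0n normr0 ltxx.
have s1 : `|s| < 1 by rewrite -sq normrX expr_lt1 in q1.
have s2_neq1 : s ^+ 2 != 1 by rewrite sq; apply: contraTneq q1 => ->; rewrite normr1 ltxx.
have s0 : 0 < `|s| by rewrite normr_gt0.
have region := aw_region_of_Rnq s0 s1 xR.
have -> : x = aw_point s (zrep x) 0 by rewrite /aw_point expr0z mul1r joukowski_zrep.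
rewrite (AWW_eq_det_pivots s_neq0 region s2_neq1); split.
  pose c (i : 'I_n.+1) := if delta i == 1 then 0%N else (n - i)%N.
  rewrite -(det_shifts_eq_pivots s_neq0 region s2_neq1 fs (c := c)) => [|i]; last first.
    by rewrite /c; case: eqP => _; rewrite ?addn0 ?subnKC // -ltnS.
  congr (\det _); apply/matrixP => i j; rewrite !mxE /c; congr eta_it.
  have ilt := ltn_ord i; have [|/delta_pm[]->] := leqP n i; rewrite ?eqxx //=; try lia.
  by move=> ni; rewrite (_ : (n - i)%N = 0%N) ?mulr0 ?if_same; lia.
rewrite (det_pivots s_neq0 region s2_neq1 fs) mulrC -prod_triangle; congr (_ * _).
apply: eq_bigr => l _; apply: eq_bigr => t _; have tl := ltn_ord t; have ln := ltn_ord l.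
rewrite /aw_gap !(eta_it_aw_point s_neq0 region) ?add0r //; try lia.
by congr (-1 / (aw_point _ _ _ - aw_point _ _ _)); lia.
Qed.
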